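(* Assume $\theta_i<1$ for all $i$ and $\theta_j>0$ for some $j$. Suppose $\mathcal G(C)$ is a star topology with center node $l$ and $\theta_l=0$. Then for every $x(0)\in\Delta_n$ the trajectory of system (A) converges exponentially to the unique equilibrium $x^*$, given by $x^*_i=1/n$ for $i\in\mathcal V_f\setminus\{l\}$, $x^*_i=\dfrac{n-\sqrt{n^2-4n\theta_i(1-\theta_i)}}{2n\theta_i}$ for $i\in\mathcal V_p$, and $x^*_l=\dfrac1n+\dfrac1n\sum_{j\in\mathcal V_p}\dfrac{\theta_j(1-x^*_j)}{1-\theta_jx^*_j}$.
   Context: Let $n\ge 2$, $\mathbf 1_n$ the all-ones vector, $I_n$ the identity matrix, $\Delta_n=\{x\in\mathbb R^n: x\ge 0,\ \mathbf 1_n^Tx=1\}$. Let $C\in\mathbb R^{n\times n}$ be a nonnegative row-stochastic matrix with zero diagonal, and $\mathcal G(C)$ the digraph on $\{1,\dots,n\}$ with an edge $(i,j)$ iff $C_{ij}>0$. $\mathcal G(C)$ is a star topology with center node $l$ if every edge of $\mathcal G(C)$ is either from $l$ or to $l$ (i.e. $C_{ij}>0$ implies $i=l$ or $j=l$). Let $\theta=(\theta_1,\dots,\theta_n)\in[0,1]^n$, $\Theta=\mathrm{diag}(\theta)$, $W(x)=\mathrm{diag}(x)+(I_n-\mathrm{diag}(x))C$. Let $\mathcal V_f=\{i:\theta_i=0\}$ and $\mathcal V_p=\{i:\theta_i>0\}$. System (A): $x(s+1)=F(x(s))$, $s=0,1,2,\dots$, $x(0)\in\Delta_n$, where $F(x)=(I_n-\Theta)(I_n-W(x)^T\Theta)^{-1}\mathbf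 1_n/n$. *)

(* the reals are an arbitrary real closed field R : rcfType
   (contains the reals as a special case; only algebra, order and sqrt used). *)
From HB Require Import structures.
From mathcomp Require Import all_boot all_order all_algebra.
Set Implicit Arguments. Unset Strict Implicit. Unset Printing Implicit Defensive.
Import Order.TTheory GRing.Theory Num.Theory.
Local Open Scope ring_scope.

Section Defs.
Variable R : rcfType.
Variable n : nat.

Definition in_simplex (x : 'cV[R]_n) : Prop :=
  (forall i, 0 <= x i 0) /\ \sum_i x i 0 = 1.

Definition row_stochastic_zero_diag (C : 'M[R]_n) : Prop :=
  (forall i j, 0 <= C i j) /\ (forall i, \sum_j C i j = 1) /\ (forall i, C i i = 0).

Definition star_topology (C : 'M[R]_n) (l : 'I_n) : Prop :=
  forall i j, 0 < C i j -> i = l \/ j = l.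

Definition diagv (x : 'cV[R]_n) : 'M[R]_n := diag_mx x^T.

Definition Wmat (C : 'M[R]_n) (x : 'cV[R]_n) : 'M[R]_n :=
  diagv x + (1%:M - diagv x) *m C.

Definition ones : 'cV[R]_n := const_mx 1.

Definition Fmap (C : 'M[R]_n) (theta : 'cV[R]_n) (x : 'cV[R]_n) : 'cV[R]_n :=
  (1%:M - diagv theta) *m invmx (1%:M - (Wmat C x)^T *m diagv theta)
    *m ((n%:R)^-1 *: ones).

Definition traj (C : 'M[R]_n) (theta x0 : 'cV[R]_n) (s : nat) : 'cV[R]_n :=
  iter s (Fmap C theta) x0.

Definition xstar_p (t : R) : R :=
  (n%:R - Num.sqrt (n%:R ^+ 2 - 4%:R * n%:R * t * (1 - t))) / (2%:R * n%:R * t).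

Definition xstar (theta : 'cV[R]_n) (l : 'I_n) : 'cV[R]_n :=
  \col_i (if i == l then
            n%:R^-1 + n%:R^-1 *
              \sum_(j | 0 < theta j 0)
                 (theta j 0 * (1 - xstar_p (theta j 0)) /
                  (1 - theta j 0 * xstar_p (theta j 0)))
          else if 0 < theta i 0 then xstar_p (theta i 0)
          else n%:R^-1).

End Defs.

From HB Require Import structures.
From mathcomp Require Import all_boot all_order all_algebra.
From mathcomp Require Import ring lra.
Import Order.TTheory GRing.Theory Num.Theory.
Local Open Scope ring_scope.

(* Every peripheral node k != l only listens to l, so C has rows e_l off the
   center.  This makes the linear system (I - W(x)^T Theta) y = 1/n solvable in
   closed form whenever the peripheral coordinates of x lie in [0,1]: F is then
   the explicit map Fstar, whose peripheral coordinates are the decoupled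
   scalar maps  g_t(a) = (1-t) / (n (1 - t a))  with t = theta_k, while the
   center coordinate only collects the peripheral loads.

   Uniqueness and exponential convergence at rate max_i theta_i then follow
   from the peripheral contraction and the simplex bound on the center. *)

Section Scalar.
Variables (R : rcfType) (n : nat).
Hypothesis n_ge2 : (2 <= n)%N.

Definition gmap (t a : R) : R := (1 - t) * (n%:R^-1 / (1 - t * a)).

Lemma xstar_p_root (t : R) : 0 < t -> t < 1 ->
  0 <= xstar_p n t <= 1 /\
  n%:R * t * xstar_p n t ^+ 2 - n%:R * xstar_p n t + (1 - t) = 0.
Proof.
move=> t0 t1.
have N2 : 2 <= n%:R :> R by rewrite (ler_nat R 2 n).
rewrite /xstar_p; set N : R := n%:R in N2 *.
set D := N ^+ 2 - 4%:R * N * t * (1 - t); set s := Num.sqrt D.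
have D0 : 0 <= D.
  have : 4%:R * t * (1 - t) <= 1 by have := sqr_ge0 (2%:R * t - 1); nra.
  rewrite /D; nra.
have s0 : 0 <= s by apply: sqrtr_ge0.
have s2 : s ^+ 2 = D by rewrite sqr_sqrtr.
have sN : s <= N.
  rewrite -(@ler_pXn2r _ 2%N) ?nnegrE //; try lra.
  have : 0 <= N * t * (1 - t) by rewrite !mulr_ge0 //; lra.
  rewrite s2 /D; nra.
set z := (N - s) / (2%:R * N * t).
have den0 : 0 < 2%:R * N * t by rewrite !mulr_gt0 //; lra.
have hz : z * (2%:R * N * t) = N - s by rewrite /z mulfVK ?gt_eqF.
have quad : N * t * z ^+ 2 - N * z + (1 - t) = 0.
  have h4 : 4%:R * N * t != 0 by rewrite gt_eqF // !mulr_gt0 //; lra.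
  apply/eqP; rewrite -(mulIr_eq0 _ (mulIf h4)); apply/eqP.
  transitivity ((z * (2%:R * N * t)) ^+ 2 - 2%:R * N * (z * (2%:R * N * t))
                + 4%:R * N * t * (1 - t)); first by ring.
  rewrite hz -[RHS](subrr D) -{1}s2 /D; ring.
have z0 : 0 <= z by rewrite /z divr_ge0 //; lra.
have : z * (2%:R * N * t) <= N by rewrite hz; lra.
by move=> zN; rewrite quad z0 /=; split=> //; nra.
Qed.

(* The quadratic is equivalent to z = g_t(z); moreover n z <= 1. *)
Lemma xstar_p_fixed (t : R) : 0 < t -> t < 1 ->
  0 <= xstar_p n t <= n%:R^-1 /\ gmap t (xstar_p n t) = xstar_p n t.
Proof.
move=> t0 t1; have [/andP[z0 z1] quad] := xstar_p_root t t0 t1.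
have N0 : 0 < n%:R :> R by rewrite ltr0n; apply: ltn_trans n_ge2.
rewrite /gmap; set z := xstar_p n t in z0 z1 quad *.
set N : R := n%:R in N0 quad *.
have tz : 0 < 1 - t * z by nra.
have key : N * z * (1 - t * z) = 1 - t by rewrite -[RHS]subr0 -quad; ring.
have Nz : N * z <= 1 by nra.
split; first by rewrite z0 /= -(ler_pM2l N0) mulfV ?gt_eqF.
by rewrite -key; field; rewrite !gt_eqF.
Qed.

(* g_t(a) - g_t(b) = t (a - b) K with 0 <= K <= 1 when a <= 1 and b <= 1/2,
   so g_t contracts by the factor t towards such points b. *)
Lemma gmap_contraction (t a b : R) : 0 <= t -> t < 1 ->
  0 <= a <= 1 -> 0 <= b <= 2%:R^-1 ->
  `|gmap t a - gmap t b| <= t * `|a - b|.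
Proof.
move=> t0 t1 /andP[a0 a1] /andP[b0 b1].
have N2 : 2 <= n%:R :> R by rewrite (ler_nat R 2 n).
have h2 : 2%:R^-1 * 2%:R = 1 :> R by rewrite mulVf // pnatr_eq0.
rewrite /gmap; set N : R := n%:R in N2 *.
have da : 1 - t <= 1 - t * a by nra.
have db : 2%:R^-1 <= 1 - t * b by nra.
set K := (1 - t) / (N * (1 - t * a) * (1 - t * b)).
have pos : 0 < N * (1 - t * a) * (1 - t * b) by rewrite !mulr_gt0 //; lra.
have K0 : 0 <= K by rewrite divr_ge0 //; lra.
have K1 : K <= 1.
  rewrite ler_pdivrMr // mul1r.
  have : (1 - t) * 1 <= (1 - t * a) * (2%:R * (1 - t * b)) by apply: ler_pM; lra.
  nra.
have -> : (1 - t) * (N^-1 / (1 - t * a)) - (1 - t) * (N^-1 / (1 - t * b))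
          = t * (a - b) * K.
  by rewrite /K; field; rewrite !gt_eqF //; lra.
rewrite normrM (ger0_norm K0) normrM (ger0_norm t0) -[leRHS]mulr1.
by apply: ler_wpM2l; rewrite ?mulr_ge0.
Qed.

End Scalar.

Arguments gmap {R} n t a.
Arguments xstar_p_fixed {R n} n_ge2 {t}.
Arguments gmap_contraction {R n} n_ge2 {t a b}.

Lemma simplex_coord01 {R : rcfType} {n : nat} {x : 'cV[R]_n} i :
  in_simplex x -> 0 <= x i 0 <= 1.
Proof.
case=> x0 x1; rewrite x0 /= -x1 (bigD1 i) //= lerDl.
exact: sumr_ge0.
Qed.

(* Since x_l = 1 - sum_{k != l} x_k on the simplex, one coordinate of the
   difference of two simplex points is bounded by all the others. *)
Lemma simplex_coord_dist {R : rcfType} {n : nat} {x y : 'cV[R]_n} l :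
  in_simplex x -> in_simplex y ->
  `|x l 0 - y l 0| <= \sum_(k | k != l) `|x k 0 - y k 0|.
Proof.
move=> [_ x1] [_ y1].
have split_l (z : 'cV[R]_n) : \sum_i z i 0 = 1 ->
    z l 0 = 1 - \sum_(k | k != l) z k 0.
  by move=> <-; rewrite (bigD1 l) //= addrK.
have shift (a b : R) : 1 - a - (1 - b) = b - a by ring.
rewrite (split_l x x1) (split_l y y1) shift -sumrB.
by apply: le_trans (ler_norm_sum _ _ _) _; apply: ler_sum => k _; rewrite distrC.
Qed.

Section Star.
Variables (R : rcfType) (n : nat) (C : 'M[R]_n) (theta : 'cV[R]_n) (l : 'I_n).
Hypotheses (n_ge2 : (2 <= n)%N) (C_stoch : row_stochastic_zero_diag C)
  (theta01 : forall i, 0 <= theta i 0 /\ theta i 0 < 1)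
  (C_star : star_topology C l) (theta_l : theta l 0 = 0).

Lemma n_neq0 : n%:R != 0 :> R.
Proof. by rewrite pnatr_eq0 -lt0n; apply: ltn_trans n_ge2. Qed.

Lemma star_row k i : k != l -> C k i = (i == l)%:R.
Proof.
move=> kl; case: C_stoch => C0 [Csum _].
have Coff j : j != l -> C k j = 0.
  move=> jl; apply/eqP; rewrite eq_le C0 andbT leNgt; apply/negP.
  by case/C_star => /eqP; rewrite ?(negbTE kl) ?(negbTE jl).
case: (eqVneq i l) => [->|il]; last by rewrite Coff.
by have := Csum k; rewrite (bigD1 l) //= big1 ?addr0 => [->|j /Coff].
Qed.

(* Hence C_ki theta_k only depends on whether i is the center
   (for k = l the factor theta_l vanishes). *)
Lemma star_row_theta k i : C k i * theta k 0 = (i == l)%:R * theta k 0.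
Proof.
by case: (eqVneq k l) => [->|kl]; [rewrite theta_l !mulr0 | rewrite star_row].
Qed.

Lemma Wmat_entry x k i :
  Wmat C x k i = x k 0 * (k == i)%:R + (1 - x k 0) * C k i.
Proof.
by rewrite /Wmat /diagv mulmxBl mul1mx mul_diag_mx !mxE mulr_natr; ring.
Qed.

Definition Amat (x : 'cV[R]_n) : 'M[R]_n := 1%:M - (Wmat C x)^T *m diagv theta.

Lemma Amat_mulr x (v : 'cV_n) i :
  (Amat x *m v) i 0 = v i 0 - \sum_k Wmat C x k i * (theta k 0 * v k 0).
Proof.
rewrite /Amat mulmxBl mul1mx -mulmxA mul_diag_mx !mxE; congr (_ - _).
by apply: eq_bigr => k _; rewrite !mxE.
Qed.

Lemma Amat_mull x (v : 'rV_n) k :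
  (v *m Amat x) 0 k = v 0 k - (\sum_i v 0 i * Wmat C x k i) * theta k 0.
Proof.
rewrite /Amat mulmxBr mulmx1 mulmxA /diagv mul_mx_diag !mxE; congr (_ - _ * _).
by apply: eq_bigr => i _; rewrite !mxE.
Qed.

(* The invariant region: peripheral coordinates in [0, 1]; it contains the
   simplex and keeps every denominator 1 - theta_i x_i positive. *)
Definition periph_unit (x : 'cV[R]_n) := forall i, i != l -> 0 <= x i 0 <= 1.

Lemma simplex_periph_unit {x} : in_simplex x -> periph_unit x.
Proof. by move=> sx i _; exact: simplex_coord01. Qed.

Lemma denom_pos {x} i : periph_unit x -> 0 < 1 - theta i 0 * x i 0.
Proof.
move=> px; case: (eqVneq i l) => [->|il]; first by rewrite theta_l mul0r subr0.
have /andP[x0 x1] := px i il; have [t0 t1] := theta01 i; nra.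
Qed.

(* A left null vector v of Amat x vanishes at l (theta_l = 0), and then at each
   k != l because v_k (1 - theta_k x_k) = 0. *)
Lemma Amat_unit {x} : periph_unit x -> Amat x \in unitmx.
Proof.
move=> px; rewrite unitmxE unitfE; apply/negP => /det0P [v /negP nz vA]; apply: nz.
have vA_k k : (v *m Amat x) 0 k = 0 by rewrite vA mxE.
have vl : v 0 l = 0 by have := vA_k l; rewrite Amat_mull theta_l mulr0 subr0.
apply/eqP/rowP => k; rewrite mxE; case: (eqVneq k l) => [->//|kl].
have row_k : \sum_i v 0 i * Wmat C x k i = v 0 k * x k 0.
  rewrite (bigD1 k) //= big1 => [|i ik]; rewrite Wmat_entry star_row //.
    by rewrite eqxx (negbTE kl) mulr1 mulr0 !addr0 mulrC.
  rewrite eq_sym (negbTE ik) mulr0 add0r.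
  by case: (eqVneq i l) => [->|_]; rewrite ?vl ?mul0r // !mulr0.
have : v 0 k * (1 - theta k 0 * x k 0) = 0.
  by rewrite -(vA_k k) Amat_mull row_k; ring.
by move/eqP; rewrite mulf_eq0 (gt_eqF (denom_pos k px)) orbF => /eqP.
Qed.

(* Closed-form solution y of  Amat x *m y = 1/n: peripheral entries
   periph_load, plus at the center the total center_load sent by the
   periphery; Fstar x = (I - Theta) y is then F x. *)
Definition periph_load (x : 'cV[R]_n) k : R := n%:R^-1 / (1 - theta k 0 * x k 0).

Definition center_load (x : 'cV[R]_n) : R :=
  \sum_k (1 - x k 0) * theta k 0 * periph_load x k.

Definition Amat_sol (x : 'cV[R]_n) : 'cV[R]_n :=
  \col_i (periph_load x i + (i == l)%:R * center_load x).

Definition Fstar (x : 'cV[R]_n) : 'cV[R]_n :=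
  \col_i ((1 - theta i 0) * (periph_load x i + (i == l)%:R * center_load x)).

Lemma WmatT_theta_sum x (v : 'I_n -> R) i :
  \sum_k Wmat C x k i * (theta k 0 * v k) =
  x i 0 * theta i 0 * v i + (i == l)%:R * \sum_k (1 - x k 0) * theta k 0 * v k.
Proof.
under eq_bigr do rewrite Wmat_entry mulrDl.
rewrite big_split /=; congr (_ + _).
  rewrite (bigD1 i) //= big1 ?addr0 => [|k /negbTE ->]; last by rewrite !mulr0 mul0r.
  by rewrite eqxx mulr1 mulrA.
rewrite mulr_sumr; apply: eq_bigr => k _.
transitivity ((1 - x k 0) * (C k i * theta k 0) * v k); first by ring.
by rewrite star_row_theta; ring.
Qed.

Lemma Amat_Amat_sol {x} :
  periph_unit x -> Amat x *m Amat_sol x = n%:R^-1 *: ones R n.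
Proof.
move=> px; apply/colP => i.
rewrite Amat_mulr (WmatT_theta_sum x (fun k => Amat_sol x k 0)).
have -> : \sum_k (1 - x k 0) * theta k 0 * Amat_sol x k 0 = center_load x.
  apply: eq_bigr => k _; rewrite mxE.
  case: (eqVneq k l) => [->|_]; first by rewrite theta_l !mulr0 !mul0r.
  by rewrite mul0r addr0.
rewrite !mxE mulr1 /periph_load; case: (eqVneq i l) => [->|il].
  by rewrite theta_l !mulr0 !mul0r subr0 divr1 add0r addrK.
have d0 := gt_eqF (denom_pos i px).
by rewrite !mul0r !addr0; field; rewrite n_neq0 d0.
Qed.

Lemma Fmap_Fstar {x} : periph_unit x -> Fmap C theta x = Fstar x.
Proof.
move=> px; rewrite /Fmap -mulmxA -(Amat_Amat_sol px) (mulKmx (Amat_unit px)).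
by apply/colP => i; rewrite mulmxBl mul1mx /diagv mul_diag_mx !mxE; ring.
Qed.

Lemma Fstar_periph x i : i != l -> Fstar x i 0 = gmap n (theta i 0) (x i 0).
Proof. by move=> il; rewrite mxE (negbTE il) mul0r addr0. Qed.

Lemma Fstar_center x : Fstar x l 0 = n%:R^-1 + center_load x.
Proof.
by rewrite mxE eqxx theta_l subr0 !mul1r /periph_load theta_l mul0r subr0 divr1.
Qed.

(* Fstar maps the invariant region into the simplex: each node i contributes
   exactly (1 - theta_i) u_i + (1 - x_i) theta_i u_i = 1/n to the total mass. *)
Lemma Fstar_simplex x : periph_unit x -> in_simplex (Fstar x).
Proof.
move=> px.
have load0 k : 0 <= periph_load x k.
  by rewrite divr_ge0 ?invr_ge0 ?ler0n ?ltW ?denom_pos.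
have center0 : 0 <= center_load x.
  apply: sumr_ge0 => k _; case: (eqVneq k l) => [->|kl].
    by rewrite theta_l mulr0 mul0r.
  have /andP[_ x1] := px k kl; have [t0 _] := theta01 k.
  by apply: mulr_ge0 (load0 k); rewrite mulr_ge0 // subr_ge0.
split=> [i|].
  rewrite mxE; have [_ t1] := theta01 i.
  apply: mulr_ge0; first by rewrite subr_ge0 ltW.
  by apply: addr_ge0 (load0 i) _; rewrite mulr_ge0 ?ler0n.
under eq_bigr do rewrite mxE mulrDr.
rewrite big_split /=.
have -> : \sum_i (1 - theta i 0) * ((i == l)%:R * center_load x) = center_load x.
  rewrite (bigD1 l) //= big1 => [|i /negbTE ->]; last by rewrite mul0r mulr0.
  by rewrite eqxx theta_l subr0 !mul1r addr0.
rewrite /center_load -big_split /=.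
have -> : \sum_i ((1 - theta i 0) * periph_load x i
                  + (1 - x i 0) * theta i 0 * periph_load x i) = \sum_(i < n) n%:R^-1.
  apply: eq_bigr => i _; have d0 := gt_eqF (denom_pos i px).
  by rewrite /periph_load; field; rewrite n_neq0 d0.
by rewrite sumr_const card_ord -(mulr_natl (n%:R^-1) n) mulfV // n_neq0.
Qed.

Local Notation xs := (xstar theta l).

Lemma theta_eq0 i : (0 < theta i 0) = false -> theta i 0 = 0.
Proof.
by move=> tpos; have [t0 _] := theta01 i; apply/eqP; rewrite eq_le t0 andbT leNgt tpos.
Qed.

(* Nodes with theta_i = 0 sit at 1/n <= 1/2 at equilibrium. *)
Lemma inv_n_le_half : n%:R^-1 <= 2%:R^-1 :> R.
Proof. by rewrite lef_pV2 ?posrE ?ltr0n ?ler_nat //; apply: ltn_trans n_ge2. Qed.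

Lemma xstar_periph i : i != l ->
  0 <= xs i 0 <= 2%:R^-1 /\ gmap n (theta i 0) (xs i 0) = xs i 0.
Proof.
move=> il; rewrite mxE (negbTE il); case: ifP => tpos.
  have [/andP[z0 z1] zfix] := xstar_p_fixed n_ge2 tpos (proj2 (theta01 i)).
  by rewrite z0 (le_trans z1 inv_n_le_half).
rewrite theta_eq0 // /gmap subr0 mul0r subr0 divr1 mul1r.
by rewrite inv_n_le_half invr_ge0 ler0n.
Qed.

Lemma xstar_periph_unit : periph_unit xs.
Proof.
move=> i il; have [/andP[x0 x1] _] := xstar_periph i il; rewrite x0 /=.
by apply: le_trans x1 _; rewrite invf_le1 ?ler1n ?ltr0n.
Qed.

Lemma center_load_xstar : center_load xs = n%:R^-1 * \sum_(j | 0 < theta j 0)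
   (theta j 0 * (1 - xstar_p n (theta j 0)) / (1 - theta j 0 * xstar_p n (theta j 0))).
Proof.
rewrite big_mkcond mulr_sumr; apply: eq_bigr => k _; case: ifP => tpos.
  have kl : k != l by apply: contraTneq tpos => ->; rewrite theta_l ltxx.
  by rewrite /periph_load mxE (negbTE kl) tpos; ring.
by rewrite theta_eq0 // mulr0 mul0r mulr0.
Qed.

Lemma Fstar_xstar : Fstar xs = xs.
Proof.
apply/colP => i; case: (eqVneq i l) => [->|il].
  by rewrite Fstar_center center_load_xstar [RHS]mxE eqxx.
by rewrite Fstar_periph //; case: (xstar_periph i il).
Qed.

Lemma xstar_simplex : in_simplex xs.
Proof. by rewrite -Fstar_xstar; apply: Fstar_simplex xstar_periph_unit. Qed.

Lemma Fstar_contraction {x} i : periph_unit x -> i != l ->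
  `|Fstar x i 0 - xs i 0| <= theta i 0 * `|x i 0 - xs i 0|.
Proof.
move=> px il; have [xs_half xs_fix] := xstar_periph i il.
rewrite Fstar_periph // -{1}xs_fix; have [t0 t1] := theta01 i.
exact: (gmap_contraction n_ge2 t0 t1 (px i il) xs_half).
Qed.

(* Uniqueness: a fixed point agrees with x* off the center by contraction
   (theta_i < 1), hence also at the center by simplex_coord_dist. *)
Lemma Fmap_fixed_unique y : in_simplex y -> Fmap C theta y = y -> y = xs.
Proof.
move=> sy; have py := simplex_periph_unit sy; rewrite (Fmap_Fstar py) => fix_y.
have periph i : i != l -> y i 0 = xs i 0.
  move=> il; have := Fstar_contraction i py il; rewrite fix_y => contr.
  have [_ t1] := theta01 i; have d0 := normr_ge0 (y i 0 - xs i 0).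
  have : `|y i 0 - xs i 0| <= 0 by nra.
  by rewrite normr_le0 subr_eq0 => /eqP.
apply/colP => i; case: (eqVneq i l) => [->|il]; last exact: periph.
apply/eqP; rewrite -subr_eq0 -normr_le0.
apply: le_trans (simplex_coord_dist l sy xstar_simplex) _.
by rewrite big1 // => k kl; rewrite periph // subrr normr0.
Qed.

Lemma traj_simplex {x0} s : in_simplex x0 -> in_simplex (traj C theta x0 s).
Proof.
move=> sx0; elim: s => [//|s IH] /=.
have px := simplex_periph_unit IH; rewrite (Fmap_Fstar px); exact: Fstar_simplex.
Qed.

(* Exponential convergence with rate r = max_i theta_i < 1: peripheral errors
   are at most r^s, so the center error is at most (n - 1) r^s. *)
Lemma traj_exponential x0 : in_simplex x0 ->
  exists c r : R, 0 <= c /\ 0 <= r /\ r < 1 /\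
    forall (s : nat) (i : 'I_n), `|traj C theta x0 s i 0 - xs i 0| <= c * r ^+ s.
Proof.
move=> sx0; set r := \big[Order.max/0]_i theta i 0.
have r0 : 0 <= r := bigmax_ge_id _ _ _ _.
have theta_r i : theta i 0 <= r := le_bigmax _ (fun i => theta i 0) i.
have r1 : r < 1 by apply: bigmax_lt => // i _; case: (theta01 i).
have periph s i : i != l -> `|traj C theta x0 s i 0 - xs i 0| <= r ^+ s.
  move=> il; elim: s => [|s IH].
    have /andP[a0 a1] := simplex_coord01 i sx0.
    have /andP[b0 b1] := simplex_coord01 i xstar_simplex.
    by rewrite expr0 ler_norml; apply/andP; split; lra.
  have px := simplex_periph_unit (traj_simplex s sx0).
  rewrite /= (Fmap_Fstar px); apply: le_trans (Fstar_contraction i px il) _.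
  by rewrite exprS ler_pM //; case: (theta01 i).
have n1 : 1 <= n.-1%:R :> R by rewrite ler1n -ltnS prednK // ltnW.
exists n.-1%:R, r; split; first exact: ler0n.
split=> //; split=> // s i; have rs0 : 0 <= r ^+ s by exact: exprn_ge0.
case: (eqVneq i l) => [->|il].
  apply: le_trans (simplex_coord_dist l (traj_simplex s sx0) xstar_simplex) _.
  apply: le_trans (ler_sum _ (fun k kl => periph s k kl)) _.
  have card_l : #|(fun k : 'I_n => k != l)| = n.-1 by rewrite cardC1 card_ord.
  by rewrite sumr_const card_l mulr_natl.
by apply: le_trans (periph s i il) _; rewrite ler_peMl.
Qed.

End Star.

(* Corollary 4. *)
Theorem corollary4 (R : rcfType) (n : nat) (C : 'M[R]_n) (theta : 'cV[R]_n)
  (l : 'I_n) :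
  (2 <= n)%N ->
  row_stochastic_zero_diag C ->
  (forall i, 0 <= theta i 0 /\ theta i 0 < 1) ->
  (exists j, 0 < theta j 0) ->
  star_topology C l ->
  theta l 0 = 0 ->
  let xs := xstar theta l in
  [/\ (forall x : 'cV[R]_n, in_simplex x ->
         (1%:M - (Wmat C x)^T *m diagv theta) \in unitmx),
      in_simplex xs,
      Fmap C theta xs = xs,
      (forall y : 'cV[R]_n, in_simplex y -> Fmap C theta y = y -> y = xs) &
      (forall x0 : 'cV[R]_n, in_simplex x0 ->
         exists c r : R, 0 <= c /\ 0 <= r /\ r < 1 /\
           forall (s : nat) (i : 'I_n),
             `|traj C theta x0 s i 0 - xs i 0| <= c * r ^+ s)].
Proof.
move=> n_ge2 C_stoch theta01 _ C_star theta_l xs; split.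
- move=> x sx; apply: (@Amat_unit R n C theta l) => //.
  exact: simplex_periph_unit sx.
- exact: xstar_simplex.
- by rewrite (@Fmap_Fstar R n C theta l) ?Fstar_xstar //; exact: xstar_periph_unit.
- exact: Fmap_fixed_unique.
- exact: traj_exponential.
Qed.
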